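(* Let $\varphi=\frac{1+\sqrt5}{2}$ and $\theta_0=\left(\frac12,\frac1\varphi,\frac1{\varphi^2}\right)$. There exists a partition $\mathcal P=\bigcup_{1\le i\le 7}P_{a_i}$ of the face $X=0$ of the cube $[0,1]^3$ and a map $\Phi$ from $\{a_1,\dots,a_7\}$ to $\{a,b,c\}^*$, given by $\Phi(a_1)=acb$, $\Phi(a_2)=abc$, $\Phi(a_3)=abcb$, $\Phi(a_4)=abb$, $\Phi(a_5)=abbc$, $\Phi(a_6)=acbb$, $\Phi(a_7)=ab$, such that for every $m\in P_{a_i}$ with well defined orbit, $\Phi(a_i)$ is the first return word of $a$ in $f_{\theta_0}(m)$.
   Context: For $m$ such that the line $m+\mathbb R\theta_0$ contains no point with more than one integer coordinate, $f_{\theta_0}(m)\in\{a,b,c\}^{\mathbb N}$ records, in order, the successive intersections of the half line $m+\mathbb R_+\theta_0$ with the planes $X=n$ (letter $a$), $Y=n$ (letter $b$), $Z=n$ (letter $c$), $n\in\mathbb Z$; for $m$ on the face $X=0$ it begins with $a$. The return words of $a$ in such a word $u$ are the factors of $u$ starting at an occurrence of $a$ and ending just before the next occurrence of $a$; the first return word is the prefix of $u$ preceding the second occurrence of $a$. *)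

From mathcomp Require Import all_boot all_order all_algebra.
From mathcomp Require Import reals.
Import Order.TTheory GRing.Theory Num.Theory.
Local Open Scope ring_scope.

Set Implicit Arguments.
Unset Strict Implicit.
Unset Printing Implicit Defensive.

(* Letters: La = a (planes X = n), Lb = b (planes Y = n), Lc = c (planes Z = n). *)
Inductive letter := La | Lb | Lc.

Definition is_a (l : letter) : bool := if l is La then true else false.

Definition coord (R : realType) (l : letter) (p : R * R * R) : R :=
  match l with La => p.1.1 | Lb => p.1.2 | Lc => p.2 end.

Definition line_coord (R : realType) (theta m : R * R * R) (l : letter) (s : R) : R :=
  coord l m + s * coord l theta.

Definition crossing (R : realType) (theta m : R * R * R) (l : letter) (s : R) : Prop :=
  0 <= s /\ line_coord theta m l s \is a Num.int.

Definition well_defined_orbit (R : realType) (theta m : R * R * R) : Prop :=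
  forall t : R, ~ (exists l1 l2 : letter, l1 <> l2 /\
      line_coord theta m l1 t \is a Num.int /\ line_coord theta m l2 t \is a Num.int).

(* v is a prefix of f_theta(m): there are times t_0 < ... < t_{|v|-1}, the j-th one
   being a crossing of the plane family of letter v_j, and these are all the
   crossings of the half line with time at most t_{|v|-1}. *)
Definition word_prefix (R : realType) (theta m : R * R * R) (v : seq letter) : Prop :=
  exists ts : seq R,
    [/\ size ts = size v,
        sorted <%R ts,
        (forall j, (j < size v)%N -> crossing theta m (nth La v j) (nth 0 ts j)) &
        (forall (l : letter) (s : R), crossing theta m l s -> s <= last 0 ts ->
           exists j, [/\ (j < size v)%N, s = nth 0 ts j & l = nth La v j])].

(* w is the first return word of a in f_theta(m): w is the prefix of f_theta(m)
   preceding the second occurrence of a, i.e. w contains exactly one a, and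
   w followed by a is a prefix of f_theta(m). *)
Definition first_return_word (R : realType) (theta m : R * R * R) (w : seq letter) : Prop :=
  count is_a w = 1%N /\ word_prefix theta m (rcons w La).

Definition face_X0 (R : realType) (p : R * R * R) : Prop :=
  p.1.1 = 0 /\ 0 <= p.1.2 <= 1 /\ 0 <= p.2 <= 1.

Definition is_partition (R : realType) (I : Type) (S : R * R * R -> Prop)
    (P : I -> R * R * R -> Prop) : Prop :=
  [/\ (forall p, S p <-> exists i, P i p),
      (forall i j p, P i p -> P j p -> i = j) &
      (forall i, exists p, P i p)].

Definition golden (R : realType) : R := (1 + Num.sqrt 5) / 2.

Definition theta0 (R : realType) : R * R * R :=
  (1 / 2, 1 / golden R, 1 / (golden R ^+ 2)).

(* Phi(a_{i+1}) for i : 'I_7. *)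
Definition Phi (i : 'I_7) : seq letter :=
  nth [::] [:: [:: La; Lc; Lb];
              [:: La; Lb; Lc];
              [:: La; Lb; Lc; Lb];
              [:: La; Lb; Lb];
              [:: La; Lb; Lb; Lc];
              [:: La; Lc; Lb; Lb];
              [:: La; Lb] ] i.

(* Along the half line from (0, y, z) in a direction (1/2, beta, gamma) with
   1/2 < beta < 1 and 0 < gamma < 1/2, the a-planes are met at times 0 and 2;
   in between, only the planes Y = 1 (always, at time (1 - y)/beta), Y = 2 and
   Z = 1 can be met, and at most once each.  The first return word of a is thus
   read off from the order of these three times with respect to each other and
   to 2; the seven possible orders cut the face X = 0 into seven nonempty
   pieces.  The golden direction qualifies since 1/phi lies in (1/2, 2/3). *)

From mathcomp Require Import all_boot all_order all_algebra.
From mathcomp Require Import reals.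
From mathcomp Require Import ring lra zify.
Import Order.TTheory GRing.Theory Num.Theory.
Local Open Scope ring_scope.

Set Implicit Arguments.
Unset Strict Implicit.
Unset Printing Implicit Defensive.

Lemma int_lt3_cases (R : realType) (x : R) :
  x \is a Num.int -> -1 < x -> x < 3 -> [\/ x = 0, x = 1 | x = 2].
Proof.
case/intrP=> n ->.
have -> : -1 = (-1 : int)%:~R :> R by rewrite rmorphN1.
rewrite -[3]/((3 : int)%:~R) !ltr_int => n_gt n_lt.
have [->|[->|->]] : n = 0 \/ n = 1 \/ n = 2 by lia.
- by constructor 1.
- by constructor 2.
- by constructor 3.
Qed.

Lemma unit_interval_not_int (R : realType) (x : R) :
  0 <= x <= 1 -> x \isn't a Num.int -> 0 < x < 1.
Proof.
rewrite !le_eqVlt => /andP[/predU1P[<-|x_gt0] /predU1P[->|x_lt1]] //;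
  by rewrite ?rpred0 ?rpred1 ?x_gt0 ?x_lt1.
Qed.

Section Crossings.
Variables (R : realType) (theta m : R * R * R).

Definition hit_time (l : letter) (k : R) : R := (k - coord l m) / coord l theta.

Lemma hit_timeK l s : coord l theta != 0 -> hit_time l (line_coord theta m l s) = s.
Proof. by move=> v0; rewrite /hit_time /line_coord addrC addKr mulfK. Qed.

Lemma crossing_hit_time l k :
  0 < coord l theta -> k \is a Num.int -> coord l m <= k -> crossing theta m l (hit_time l k).
Proof.
move=> v_gt0 k_int x_le; split; first by apply: divr_ge0; rewrite ?subr_ge0 // ltW.
by rewrite /line_coord divfK ?gt_eqF // addrC subrK.
Qed.

Lemma crossing_letter_uniq l1 l2 s :
  well_defined_orbit theta m -> crossing theta m l1 s -> crossing theta m l2 s -> l1 = l2.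
Proof.
have [//|ne] : l1 = l2 \/ l1 <> l2 by case: l1; case: l2; (by left) || by right.
move=> wd [_ int1] [_ int2].
by exfalso; apply: (wd s); exists l1, l2.
Qed.

Lemma crossing_time_neq l1 l2 s1 s2 : well_defined_orbit theta m ->
  crossing theta m l1 s1 -> crossing theta m l2 s2 -> l1 <> l2 -> s1 != s2.
Proof.
move=> wd cross1 cross2 l_ne; apply/eqP => s_eq.
by apply/l_ne/(crossing_letter_uniq wd cross1); rewrite s_eq.
Qed.

End Crossings.

(* For b-crossings at times t1 < t2, a c-crossing at time t3 and a-crossings
   at times 0 and 2, the index i such that Phi i lists the crossings of [0, 2)
   in chronological order. *)
Definition return_index (R : realType) (t1 t2 t3 : R) : nat :=
  if t2 < 2 then
    if t3 < 2 then (if t3 < t1 then 5 else if t3 < t2 then 2 else 4) else 3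
  else if t3 < 2 then (if t3 < t1 then 0 else 1) else 6.

Lemma return_index_lt (R : realType) (t1 t2 t3 : R) : (return_index t1 t2 t3 < 7)%N.
Proof. by rewrite /return_index; repeat case: ifP. Qed.

Definition return_piece (R : realType) (theta m : R * R * R) : 'I_7 :=
  Ordinal (return_index_lt (hit_time theta m Lb 1) (hit_time theta m Lb 2)
                           (hit_time theta m Lc 1)).

Section Direction.
Variables (R : realType) (beta gamma : R).
Hypothesis beta_bounds : 1/2 < beta < 1.
Hypothesis gamma_bounds : 0 < gamma < 1/2.

Local Notation theta := ((1/2 : R), beta, gamma).

Section Orbit.
Variables y z : R.
Local Notation m := (((0 : R), y), z).
Hypothesis y_bounds : 0 <= y <= 1.
Hypothesis z_bounds : 0 <= z <= 1.
Hypothesis wd : well_defined_orbit theta m.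

Local Notation tb1 := (hit_time theta m Lb 1).
Local Notation tb2 := (hit_time theta m Lb 2).
Local Notation tc := (hit_time theta m Lc 1).

Lemma crossing_a0 : crossing theta m La 0.
Proof. by split; rewrite // /line_coord /= mul0r addr0 rpred0. Qed.

Lemma crossing_a2 : crossing theta m La 2.
Proof. by split; rewrite ?ler0n // /line_coord /= add0r mul1r divff ?rpred1 ?pnatr_eq0. Qed.

Lemma start_coord_not_int l : l <> La -> coord l m \isn't a Num.int.
Proof.
move=> l_ne; apply/negP => x_int; apply: l_ne.
apply: (crossing_letter_uniq wd _ crossing_a0).
by split; rewrite // /line_coord mul0r addr0.
Qed.

Lemma y_interior : 0 < y < 1.
Proof. exact: (unit_interval_not_int y_bounds (@start_coord_not_int Lb ltac:(by []))). Qed.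

Lemma z_interior : 0 < z < 1.
Proof. exact: (unit_interval_not_int z_bounds (@start_coord_not_int Lc ltac:(by []))). Qed.

Lemma crossing_b1 : crossing theta m Lb tb1.
Proof.
have [y_gt0 y_lt1] := andP y_interior; have [beta_gt _] := andP beta_bounds.
by apply: crossing_hit_time; rewrite ?rpred1 //=; lra.
Qed.

Lemma crossing_b2 : crossing theta m Lb tb2.
Proof.
have [y_gt0 y_lt1] := andP y_interior; have [beta_gt _] := andP beta_bounds.
by apply: crossing_hit_time; rewrite ?rpred_nat //=; lra.
Qed.

Lemma crossing_c : crossing theta m Lc tc.
Proof.
have [z_gt0 z_lt1] := andP z_interior; have [gamma_gt0 _] := andP gamma_bounds.
by apply: crossing_hit_time; rewrite ?rpred1 //=; lra.
Qed.

Lemma hit_times_order : [/\ 0 < tb1 < 2, tb1 < tb2 & 0 < tc].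
Proof.
have [y_gt0 y_lt1] := andP y_interior; have [z_gt0 z_lt1] := andP z_interior.
have [beta_gt beta_lt1] := andP beta_bounds; have [gamma_gt0 _] := andP gamma_bounds.
have beta_gt0 : 0 < beta by lra.
rewrite /hit_time /= !divr_gt0 ?subr_gt0 // ltr_pdivrMr // ltr_pM2r ?invr_gt0 //.
split=> //; lra.
Qed.

Lemma crossing_lt_return l s : l <> La -> crossing theta m l s -> s <= 2 -> s < 2.
Proof.
move=> l_ne cross s_le2; rewrite lt_neqAle s_le2 andbT; apply/eqP => s2.
by apply: l_ne; apply: (crossing_letter_uniq wd cross); rewrite s2; exact: crossing_a2.
Qed.

Lemma crossing_cases l s : crossing theta m l s -> s <= 2 ->
  [\/ l = La /\ (s = 0 \/ s = 2), l = Lb /\ s = tb1,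
      [/\ l = Lb, s = tb2 & tb2 < 2] | [/\ l = Lc, s = tc & tc < 2]].
Proof.
move=> cross s_le2; have [s_ge0 k_int] := cross.
have [y_gt0 y_lt1] := andP y_interior; have [z_gt0 z_lt1] := andP z_interior.
have [beta_gt beta_lt1] := andP beta_bounds; have [gamma_gt0 gamma_lt] := andP gamma_bounds.
have speed_gt0 : 0 < coord l theta by case: l {cross k_int} => /=; lra.
have speed_bound : s * coord l theta <= 2 * coord l theta := ler_wpM2r (ltW speed_gt0) s_le2.
have s_hit : s = hit_time theta m l (line_coord theta m l s).
  by rewrite hit_timeK ?gt_eqF.
have s_lt2 : l <> La -> s < 2 := fun l_ne => crossing_lt_return l_ne cross s_le2.
move: s_hit k_int speed_bound s_lt2; rewrite /line_coord.
have := mulr_ge0 s_ge0 (ltW speed_gt0).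
case: l {cross speed_gt0} => /= prod_ge0 s_hit k_int speed_bound s_lt2.
- have [k0|k1|k2] := int_lt3_cases k_int ltac:(lra) ltac:(lra).
  + by constructor 1; split=> //; left; lra.
  + by constructor 1; split=> //; right; lra.
  + by exfalso; lra.
- have [k0|k1|k2] := int_lt3_cases k_int ltac:(lra) ltac:(lra).
  + by exfalso; lra.
  + by constructor 2; rewrite s_hit k1.
  + have s_lt := s_lt2 ltac:(by []).
    by rewrite s_hit k2 in s_lt *; constructor 3.
- have [k0|k1|k2] := int_lt3_cases k_int ltac:(lra) ltac:(lra).
  + by exfalso; lra.
  + have s_lt := s_lt2 ltac:(by []).
    by rewrite s_hit k1 in s_lt *; constructor 4.
  + by exfalso; lra.
Qed.

Ltac crossing_schedule ts :=
  split=> //=; exists ts; split=> //=;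
  [ rewrite ?andbT; repeat (apply/andP; split); lra
  | case=> [|[|[|[|[|j]]]]] //= _;
    by [exact: crossing_a0 | exact: crossing_a2 | exact: crossing_b1
       | exact: crossing_b2 | exact: crossing_c]
  | move=> l s /crossing_cases cases /cases[[-> [->|->]]|[-> ->]|[-> -> ?]|[-> -> ?]];
    by [exists 0%N | exists 1%N | exists 2%N | exists 3%N | exists 4%N | exfalso; lra] ].

Lemma first_return_word_piece : first_return_word theta m (Phi (return_piece theta m)).
Proof.
have [/andP[t1_gt0 t1_lt2] t12 t3_gt0] := hit_times_order.
have t13 : tb1 != tc := crossing_time_neq wd crossing_b1 crossing_c ltac:(by []).
have t23 : tb2 != tc := crossing_time_neq wd crossing_b2 crossing_c ltac:(by []).
rewrite /Phi /return_piece /= /return_index.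
case: (ltP tb2 2) => t2; case: (ltP tc 2) => t3.
- case: (ltP tc tb1) => t31; first by crossing_schedule [:: 0; tc; tb1; tb2; 2].
  have {}t31 : tb1 < tc by rewrite lt_neqAle t13.
  case: (ltP tc tb2) => t32; first by crossing_schedule [:: 0; tb1; tc; tb2; 2].
  have {}t32 : tb2 < tc by rewrite lt_neqAle t23.
  by crossing_schedule [:: 0; tb1; tb2; tc; 2].
- by crossing_schedule [:: 0; tb1; tb2; 2].
- case: (ltP tc tb1) => t31; first by crossing_schedule [:: 0; tc; tb1; 2].
  have {}t31 : tb1 < tc by rewrite lt_neqAle t13.
  by crossing_schedule [:: 0; tb1; tc; 2].
- by crossing_schedule [:: 0; tb1; 2].
Qed.

End Orbit.

Lemma hit_times_at t1 t3 : let p := ((0, 1 - t1 * beta), 1 - t3 * gamma) in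
  [/\ hit_time theta p Lb 1 = t1, hit_time theta p Lb 2 = t1 + beta^-1
    & hit_time theta p Lc 1 = t3].
Proof.
have [beta_gt _] := andP beta_bounds; have [gamma_gt0 _] := andP gamma_bounds.
by rewrite /hit_time /=; split; field; rewrite ?gt_eqF //; lra.
Qed.

Ltac eval_comparisons :=
  repeat match goal with |- context [?x < ?y] =>
    first [ rewrite (_ : x < y = true); last by apply/idP; lra
          | rewrite (_ : x < y = false); last by apply/negbTE; rewrite -leNgt; lra ]
  end.

Lemma return_index_surj n : (n < 7)%N -> exists p, face_X0 p /\
  return_index (hit_time theta p Lb 1) (hit_time theta p Lb 2) (hit_time theta p Lc 1) = n.
Proof.
have [beta_gt beta_lt1] := andP beta_bounds; have [gamma_gt0 gamma_lt] := andP gamma_bounds.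
have invbeta_beta : beta^-1 * beta = 1 by rewrite mulVf // gt_eqF //; lra.
have [invbeta_gt1 invbeta_lt2] : 1 < beta^-1 /\ beta^-1 < 2 by split; nra.
have t2_gamma_bounds : 0 <= (1 + beta^-1 / 2) * gamma <= 1.
  have invbeta_gamma : 0 < beta^-1 * gamma < 2 * gamma.
    by rewrite ltr_pM2r // mulr_gt0 ?invr_gt0 //; lra.
  by rewrite mulrDl mul1r mulrAC; lra.
suff witness t1 t3 : 0 <= t1 * beta <= 1 -> 0 <= t3 * gamma <= 1 ->
    return_index t1 (t1 + beta^-1) t3 = n -> exists p, face_X0 p /\
  return_index (hit_time theta p Lb 1) (hit_time theta p Lb 2) (hit_time theta p Lc 1) = n.
  (* t1 = 2 - 1/beta puts the second b-crossing at time 2, while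
     t1 = 1 - 1/(2 beta) puts both b-crossings inside (0, 2). *)
  case: n witness => [|[|[|[|[|[|[|//]]]]]]] witness _;
    [ apply: (witness (2 - beta^-1) 0) | apply: (witness (2 - beta^-1) 1)
    | apply: (witness (1 - beta^-1 / 2) 1) | apply: (witness (1 - beta^-1 / 2) 2)
    | apply: (witness (1 - beta^-1 / 2) (1 + beta^-1 / 2))
    | apply: (witness (1 - beta^-1 / 2) 0) | apply: (witness (2 - beta^-1) 2) ];
    by (apply/andP; split; lra) || (rewrite /return_index; eval_comparisons).
move=> t1_bounds t3_bounds index_eq; exists ((0, 1 - t1 * beta), 1 - t3 * gamma).
have [-> -> ->] := hit_times_at t1 t3.
by split=> //; rewrite /face_X0 /=; split=> //; split; apply/andP; split; lra.
Qed.

Theorem first_return_partition :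
  exists P : 'I_7 -> R * R * R -> Prop,
    is_partition (@face_X0 R) P /\
    (forall i m, P i m -> well_defined_orbit theta m -> first_return_word theta m (Phi i)).
Proof.
exists (fun i p => face_X0 p /\ return_piece theta p = i); split; first split.
- by move=> p; split=> [face | [i []]] //; exists (return_piece theta p).
- by move=> i j p [_ <-] [_ <-].
- move=> i; have [p [face index_eq]] := return_index_surj (ltn_ord i).
  by exists p; split=> //; apply: val_inj.
move=> i [[x y] z] [[/= -> [y_bounds z_bounds]] <-] wd.
exact: first_return_word_piece.
Qed.

End Direction.

Lemma golden_inv_bounds (R : realType) : 1/2 < 1 / golden R < 2/3.
Proof.
have s5 : Num.sqrt 5 ^+ 2 = 5 :> R by rewrite sqr_sqrtr.
have s_ge0 : 0 <= Num.sqrt 5 :> R by rewrite sqrtr_ge0.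
have [g_gt g_lt] : 3/2 < golden R /\ golden R < 2 by rewrite /golden; split; nra.
have inv_g : 1 / golden R * golden R = 1 by rewrite mul1r mulVf // gt_eqF //; lra.
by apply/andP; split; nra.
Qed.

Theorem lemma4 (R : realType) :
  exists P : 'I_7 -> R * R * R -> Prop,
    is_partition (@face_X0 R) P /\
    (forall (i : 'I_7) (m : R * R * R), P i m ->
       well_defined_orbit (theta0 R) m ->
       first_return_word (theta0 R) m (Phi i)).
Proof.
have [r_gt r_lt] := andP (golden_inv_bounds R).
rewrite /theta0 (_ : 1 / golden R ^+ 2 = (1 / golden R) ^+ 2); last by rewrite !mul1r exprVn.
by apply: first_return_partition; apply/andP; split; nra.
Qed.
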